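(* (1) Every $a\in\mathbb{S}_1\setminus F$, viewed as a linear operator on $K[x]$, has finite-dimensional kernel and cokernel, and $\mathrm{ind}(a)=-\deg_x(\bar a)$, where $\bar a$ is the image of $a$ in $\mathbb{S}_1/F\simeq K[x,x^{-1}]$. (2) $\mathrm{ind}(\sigma(a))=\mathrm{ind}(a)$ for all $\sigma\in\mathrm{Aut}_{K\text{-alg}}(\mathbb{S}_1)$ and all $a\in\mathbb{S}_1\setminus F$.
   Context: $K$ is a field of characteristic zero. $\mathbb{S}_1=K\langle x,y\mid yx=1\rangle$ acts faithfully on $P_1=K[x]$ by $x*x^i=x^{i+1}$, $y*x^i=x^{i-1}$ ($i\ge1$), $y*1=0$; we regard $\mathbb{S}_1\subset\mathrm{End}_K(K[x])$. $E_{ij}:=x^iy^j-x^{i+1}y^{j+1}$ and $F=\bigoplus_{i,j\in\mathbb{N}}KE_{ij}$ is an ideal with $\mathbb{S}_1/F\simeq K[x,x^{-1}]$ via $x\mapsto x$, $y\mapsto x^{-1}$. For a nonzero Laurent polynomial $u=\sum_{i=s}^d\lambda_ix^i$ with $\lambda_d\ne0$, $\deg_x(u):=d$. For a linear map $\varphi$ with finite-dimensional kernel and cokernel, $\mathrm{ind}(\varphi):=\dim\ker\varphi-\dim\mathrm{coker}\,\varphi$. *)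

From HB Require Import structures.
From mathcomp Require Import all_boot all_order all_algebra.
Set Implicit Arguments. Unset Strict Implicit. Unset Printing Implicit Defensive.
Import Order.TTheory GRing.Theory Num.Theory.
Local Open Scope ring_scope.

Section Jacobson.
Variable K : fieldType.

(* K-linear endomorphisms of K[x] are represented as plain functions. *)
Definition op := {poly K} -> {poly K}.

(* the generators of S_1 acting on K[x]: x * x^i = x^(i+1), y * x^i = x^(i-1), y * 1 = 0 *)
Definition Xop : op := fun p => 'X * p.
Definition Yop : op := fun p => \poly_(i < size p) p`_i.+1.

Definition opadd (a b : op) : op := fun p => a p + b p.
Definition opsub (a b : op) : op := fun p => a p - b p.
Definition opscale (k : K) (a : op) : op := fun p => k *: a p.
Definition opmul (a b : op) : op := fun p => a (b p).
Definition opid : op := fun p => p.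

Definition Xpow (i : nat) : op := iter i (opmul Xop) opid.
Definition Ypow (j : nat) : op := iter j (opmul Yop) opid.

(* S_1 = K<x,y | yx = 1>, viewed (via its faithful action) as the K-subalgebra
   of End_K(K[x]) generated by x and y (closed under pointwise equality). *)
Inductive S1 : op -> Prop :=
| S1_X : S1 Xop
| S1_Y : S1 Yop
| S1_scal (k : K) : S1 (opscale k opid)
| S1_add a b : S1 a -> S1 b -> S1 (opadd a b)
| S1_mul a b : S1 a -> S1 b -> S1 (opmul a b)
| S1_ext a b : S1 a -> a =1 b -> S1 b.

Definition Eop (i j : nat) : op :=
  opsub (opmul (Xpow i) (Ypow j)) (opmul (Xpow i.+1) (Ypow j.+1)).

Definition inF (a : op) : Prop :=
  exists (n : nat) (c : nat -> nat -> K),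
    forall p, a p = \sum_(i < n) \sum_(j < n) c i j *: Eop i j p.

(* The Laurent polynomial u = x^(-s) p(x) lifts to y^s p(x) in S_1;
   under S_1/F ~ K[x,x^-1] (x |-> x, y |-> x^-1) its image is u. *)
Definition laurent_lift (s : nat) (p : {poly K}) : op :=
  opmul (Ypow s) (fun q => p * q).

Definition laurent_deg (s : nat) (p : {poly K}) : int :=
  ((size p).-1)%:Z - s%:Z.

Definition dim_ker (phi : op) (d : nat) : Prop :=
  exists B : 'I_d -> {poly K},
    (forall c : 'I_d -> K, \sum_(i < d) c i *: B i = 0 -> forall i, c i = 0) /\
    (forall p, phi p = 0 <-> exists c : 'I_d -> K, p = \sum_(i < d) c i *: B i).

Definition dim_coker (phi : op) (d : nat) : Prop :=
  exists B : 'I_d -> {poly K},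
    (forall (r : {poly K}) (c : 'I_d -> K),
        phi r + \sum_(i < d) c i *: B i = 0 -> forall i, c i = 0) /\
    (forall q, exists (r : {poly K}) (c : 'I_d -> K),
        q = phi r + \sum_(i < d) c i *: B i).

Definition has_index (phi : op) (n : int) : Prop :=
  exists dk dc, dim_ker phi dk /\ dim_coker phi dc /\ n = dk%:Z - dc%:Z.

Definition is_S1_aut (sigma : op -> op) : Prop :=
  (forall a, S1 a -> S1 (sigma a)) /\
      (forall b, S1 b -> exists a, S1 a /\ sigma a =1 b) /\
      (forall a b, S1 a -> S1 b -> sigma a =1 sigma b -> a =1 b) /\
      (forall a b, S1 a -> S1 b -> sigma (opadd a b) =1 opadd (sigma a) (sigma b)) /\
      (forall k a, S1 a -> sigma (opscale k a) =1 opscale k (sigma a)) /\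
      (forall a b, S1 a -> S1 b -> sigma (opmul a b) =1 opmul (sigma a) (sigma b)) /\
      sigma opid =1 opid.

End Jacobson.

From HB Require Import structures.
From mathcomp Require Import all_boot all_order all_algebra.
From mathcomp Require Import ring zify.
From Stdlib Require Import FunctionalExtensionality ClassicalEpsilon.
Set Implicit Arguments. Unset Strict Implicit. Unset Printing Implicit Defensive.
Import Order.TTheory GRing.Theory Num.Theory.
Local Open Scope ring_scope.

(* Elements of S1 are "tame" operators, and the ideal F is characterised
   intrinsically: its elements are the operators that kill x^N K[x] and take
   values in degree < N for some N.  Modulo F every a in S1 is congruent to a
   Laurent lift y^s p of its symbol x^-s p in S1/F = K[x,x^-1], and lifts
   multiply like Laurent polynomials.
   Part (1): if a = y^s p modulo F with p <> 0, then a acts on x^(N+s) K[x] as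
   multiplication by q = x^N p.  Writing K[x] = K[x]_(<N+s) + x^(N+s) K[x],
   kernel and cokernel of a are those of the finite matrix of u |-> a u mod q,
   and rank-nullity gives the index (N + s) - deg q = s - deg p.  A dimension
   comparison lemma shows that the index is well defined.
   Part (2): an endomorphism rho of S1 preserves F (F is spanned by the
   x^i E00 y^j, and E00 x = 0 with x left invertible), so it acts on symbols by
   x |-> mu x^e, y |-> mu^-1 x^-e; for an automorphism e = 1, hence sigma(a) has
   symbol mu^-t x^-t r(mu x), of the same degree as x^-t r. *)

Section Jacobson.
Variable K : fieldType.
Implicit Types (a b : op K) (p q r u : {poly K}).

Definition linear_op a := forall k p q, a (k *: p + q) = k *: a p + a q.

Section LinearOp.
Variables (a : op K) (La : linear_op a).

Lemma lin0 : a 0 = 0.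
Proof.
have := La 1 0 0; rewrite scale1r !addr0 => /(congr1 (fun t => t - a 0)).
by rewrite subrr addrK scale1r => <-.
Qed.

Lemma linD p q : a (p + q) = a p + a q.
Proof. by have := La 1 p q; rewrite !scale1r. Qed.

Lemma linZ k p : a (k *: p) = k *: a p.
Proof. by rewrite -[k *: p]addr0 La lin0 addr0. Qed.

Lemma linN p : a (- p) = - a p.
Proof. by rewrite -scaleN1r linZ scaleN1r. Qed.

Lemma linB p q : a (p - q) = a p - a q.
Proof. by rewrite linD linN. Qed.

Lemma lin_sum (I : Type) (s : seq I) (P : pred I) (G : I -> {poly K}) :
  a (\sum_(i <- s | P i) G i) = \sum_(i <- s | P i) a (G i).
Proof. by elim/big_rec2: _ => [|i y1 y2 _ <-]; [exact: lin0 | exact: linD]. Qed.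

End LinearOp.

Lemma coefY p i : (Yop p)`_i = p`_i.+1.
Proof.
rewrite /Yop coef_poly; case: ltnP => // H.
by rewrite nth_default // (leq_trans H).
Qed.

Lemma coefYpow s p i : (Ypow s p)`_i = p`_(i + s).
Proof.
elim: s p i => [|s IH] p i /=; first by rewrite addn0.
by rewrite /opmul coefY IH addnS addSn.
Qed.

Lemma XpowE i p : Xpow i p = 'X^i * p.
Proof.
elim: i p => [|i IH] p /=; first by rewrite expr0 mul1r.
by rewrite /opmul /Xop IH exprS mulrA.
Qed.

Lemma linear_Ypow s : linear_op (@Ypow K s).
Proof. by move=> k p q; apply/polyP => i; rewrite coefD coefZ !coefYpow coefD coefZ. Qed.

Lemma linear_Y : linear_op (@Yop K).
Proof. exact: (linear_Ypow 1). Qed.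

Lemma Ypow_add s t p : Ypow (s + t) p = Ypow s (Ypow t p).
Proof. by apply/polyP => i; rewrite !coefYpow addnA. Qed.

Lemma YpowXM s N q : Ypow s ('X^(N + s) * q) = 'X^N * q.
Proof.
apply/polyP => i; rewrite coefYpow !coefXnM ltn_add2r.
by case: ltnP => // _; rewrite subnDr.
Qed.

Lemma YX : opmul (@Yop K) (@Xop K) = @opid K.
Proof.
apply: functional_extensionality => p; rewrite /opmul /Xop.
by rewrite -[Yop _]/(Ypow 1 ('X^(0 + 1) * p)) YpowXM expr0 mul1r.
Qed.

Lemma Ydecomp p : p = 'X * Yop p + (p`_0)%:P.
Proof.
apply/polyP => k; rewrite coefD coefXM coefC coefY.
by case: k => [|k] /=; rewrite ?add0r ?addr0.
Qed.

Lemma EopE i j p : Eop i j p = p`_j *: 'X^i.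
Proof.
rewrite /Eop /opsub /opmul !XpowE exprS (mulrC 'X) -mulrA -mulrBr -mul_polyC mulrC.
congr (_ * _); apply/polyP => k; rewrite coefB coefXM coefC !coefYpow.
by case: k => [|k] /=; [rewrite subr0 | rewrite addSn -addnS subrr].
Qed.

Lemma poly_split N p : p = \poly_(j < N) p`_j + 'X^N * \poly_(i < size p) p`_(i + N).
Proof.
apply/polyP => k; rewrite coefD coefXnM !coef_poly; case: ltnP => H; first by rewrite addr0.
rewrite add0r subnK //; case: ltnP => // H2.
by rewrite nth_default // (leq_trans H2) // leq_subr.
Qed.

Lemma poly_small N p : (size p <= N)%N -> p = \sum_(j < N) p`_j *: 'X^j.
Proof.
move=> H; apply/polyP => k; rewrite coef_sum.
case: (ltnP k N) => [Hk|Hk].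
  rewrite (bigD1 (Ordinal Hk)) //= coefZ coefXn eqxx mulr1 big1 ?addr0 // => j /eqP Hj.
  by rewrite coefZ coefXn; case: eqP => [E|]; [case: Hj; apply: val_inj | rewrite mulr0].
rewrite nth_default ?(leq_trans H) // big1 // => j _.
by rewrite coefZ coefXn; case: eqP => [E|]; [move: (ltn_ord j); rewrite -E ltnNge Hk | rewrite mulr0].
Qed.

Definition truncated N a :=
  [/\ linear_op a, forall q, a ('X^N * q) = 0 & forall p, (size (a p) <= N)%N].

Definition F_op a := exists N, truncated N a.

Lemma truncated_mono N M a : (N <= M)%N -> truncated N a -> truncated M a.
Proof.
move=> NM [La H1 H2]; split => // [q|p]; last exact: leq_trans (H2 p) NM.
by rewrite -(subnK NM) addnC exprD -mulrA H1.
Qed.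

(* The spanning-set definition of F agrees with the intrinsic one: a truncated
   operator is the combination of the E_ij given by its matrix coefficients. *)
Lemma inF_F_op a : inF a <-> F_op a.
Proof.
split.
  case=> n [c Hc]; exists n; split.
  - move=> k p q; rewrite !Hc scaler_sumr -big_split /=; apply: eq_bigr => i _.
    rewrite scaler_sumr -big_split /=; apply: eq_bigr => j _.
    by rewrite !EopE coefD coefZ scalerDl scalerDr !scalerA mulrCA mulrA.
  - move=> q; rewrite Hc big1 // => i _; rewrite big1 // => j _.
    by rewrite EopE coefXnM ltn_ord scale0r scaler0.
  - move=> p; rewrite Hc; apply: (leq_trans (size_sum _ _ _)).
    apply/bigmax_leqP => i _; apply: (leq_trans (size_sum _ _ _)).
    apply/bigmax_leqP => j _; rewrite EopE; apply: (leq_trans (size_scale_leq _ _)).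
    by apply: (leq_trans (size_scale_leq _ _)); rewrite size_polyXn.
case=> N [La H1 H2]; exists N, (fun i j => (a 'X^j)`_i) => p.
rewrite {1}(poly_split N p) linD // H1 addr0 (poly_small (size_poly _ _)) lin_sum //.
rewrite exchange_big /=; apply: eq_bigr => j _; rewrite linZ // coef_poly ltn_ord {1}(poly_small (H2 _)) scaler_sumr.
by apply: eq_bigr => i _; rewrite EopE !scalerA mulrC.
Qed.

Definition tame a := [/\ linear_op a,
  exists m, forall p, (size (a p) <= size p + m)%N &
  exists m, forall N q, exists r, a ('X^(N + m) * q) = 'X^N * r].

Lemma tame_X : tame (@Xop K).
Proof.
split.
- by move=> k p q; rewrite /Xop mulrDr scalerAr.
- exists 1%N => p; rewrite /Xop mulrC addn1.
  by apply: leq_trans (size_polyMleq _ _) _; rewrite size_polyX addn2.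
- by exists 0%N => N q; exists ('X * q); rewrite /Xop addn0 mulrCA.
Qed.

Lemma tame_Y : tame (@Yop K).
Proof.
split; first exact: linear_Y.
- by exists 0%N => p; rewrite addn0 size_poly.
- by exists 1%N => N q; exists q; apply: (@YpowXM 1).
Qed.

Lemma tame_scal k : tame (opscale k (@opid K)).
Proof.
split.
- by move=> c p q; rewrite /opscale /opid scalerDr !scalerA mulrC.
- by exists 0%N => p; rewrite addn0 /opscale size_scale_leq.
- by exists 0%N => N q; exists (k *: q); rewrite /opscale /opid addn0 scalerAr.
Qed.

Lemma tame_add a b : tame a -> tame b -> tame (opadd a b).
Proof.
case=> La [m1 H1] [n1 G1] [Lb [m2 H2] [n2 G2]]; split.
- by move=> k p q; rewrite /opadd La Lb scalerDr addrACA.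
- exists (m1 + m2)%N => p; rewrite /opadd; apply: (leq_trans (size_polyD _ _)).
  rewrite geq_max (leq_trans (H1 p)) ?(leq_trans (H2 p)) //.
    by rewrite leq_add2l leq_addl.
  by rewrite leq_add2l leq_addr.
- exists (n1 + n2)%N => N q.
  have [r1 E1] := G1 (N + n2)%N q; have [r2 E2] := G2 (N + n1)%N q.
  exists ('X^n2 * r1 + 'X^n1 * r2).
  rewrite /opadd (addnC n1) addnA E1 -addnA (addnC n2) addnA E2.
  by rewrite !exprD -!mulrA mulrDr.
Qed.

Lemma tame_mul a b : tame a -> tame b -> tame (opmul a b).
Proof.
case=> La [m1 H1] [n1 G1] [Lb [m2 H2] [n2 G2]]; split.
- by move=> k p q; rewrite /opmul Lb La.
- by exists (m2 + m1)%N => p; rewrite /opmul addnA (leq_trans (H1 _)) // leq_add2r.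
- exists (n2 + n1)%N => N q.
  have [r1 E1] := G2 (N + n1)%N q; have [r2 E2] := G1 N r1.
  by exists r2; rewrite /opmul (addnC n2) addnA E1 E2.
Qed.

Lemma S1_tame a : S1 a -> tame a.
Proof.
elim=> {a} [||k|a b _ ? _ ?|a b _ ? _ ?|a b _ Ha E].
- exact: tame_X.
- exact: tame_Y.
- exact: tame_scal.
- exact: tame_add.
- exact: tame_mul.
- by rewrite -(functional_extensionality _ _ E).
Qed.

Lemma tame_linear a : tame a -> linear_op a.
Proof. by case. Qed.

Definition op0 : op K := fun=> 0.

Lemma F_op_zero : F_op op0.
Proof. by exists 0%N; split => [k p q|q|p]; rewrite ?scaler0 ?addr0 ?size_poly0. Qed.

Lemma F_op_add a b : F_op a -> F_op b -> F_op (opadd a b).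
Proof.
case=> N1 Ta [N2 Tb].
have [La Ha Sa] := truncated_mono (leq_maxl N1 N2) Ta.
have [Lb Hb Sb] := truncated_mono (leq_maxr N1 N2) Tb.
exists (maxn N1 N2); split.
- by move=> k p q; rewrite /opadd La Lb scalerDr addrACA.
- by move=> q; rewrite /opadd Ha Hb addr0.
- by move=> p; rewrite /opadd (leq_trans (size_polyD _ _)) // geq_max Sa Sb.
Qed.

Lemma F_op_scale k a : F_op a -> F_op (opscale k a).
Proof.
case=> N [La H1 S]; exists N; split.
- by move=> c p q; rewrite /opscale La scalerDr !scalerA mulrC.
- by move=> q; rewrite /opscale H1 scaler0.
- by move=> p; rewrite /opscale (leq_trans (size_scale_leq _ _)).
Qed.

Lemma F_op_sub a b : F_op a -> F_op b -> F_op (opsub a b).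
Proof.
move=> Ha Hb; have := F_op_add Ha (F_op_scale (-1) Hb).
congr F_op; apply: functional_extensionality => p.
by rewrite /opadd /opscale /opsub scaleN1r.
Qed.

Lemma F_op_left g a : tame g -> F_op a -> F_op (opmul g a).
Proof.
case=> Lg [m Hm] _ [N [La H1 S]]; exists (N + m)%N; split.
- by move=> k p q; rewrite /opmul La Lg.
- by move=> q; rewrite /opmul -(subnK (leq_addr m N)) addnC exprD -mulrA H1 lin0.
- by move=> p; rewrite /opmul (leq_trans (Hm _)) // leq_add2r.
Qed.

Lemma F_op_right g a : tame g -> F_op a -> F_op (opmul a g).
Proof.
case=> Lg _ [m Hm] [N [La H1 S]]; exists (N + m)%N; split.
- by move=> k p q; rewrite /opmul Lg La.
- by move=> q; rewrite /opmul; have [r ->] := Hm N q; rewrite H1.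
- by move=> p; rewrite /opmul (leq_trans (S _)) // leq_addr.
Qed.

Definition congF a b := F_op (opsub a b).

Lemma congF_ext a b : a =1 b -> congF a b.
Proof.
move/functional_extensionality => ->; rewrite /congF.
have -> : opsub b b = op0 by apply: functional_extensionality => p; rewrite /opsub subrr.
exact: F_op_zero.
Qed.

Lemma congF_refl a : congF a a.
Proof. exact: congF_ext. Qed.

Lemma congF_trans a b c : congF a b -> congF b c -> congF a c.
Proof.
move=> H1 H2; have := F_op_add H1 H2; congr F_op.
by apply: functional_extensionality => p; rewrite /opadd /opsub addrA subrK.
Qed.

Lemma congF_add a b c d : congF a b -> congF c d -> congF (opadd a c) (opadd b d).
Proof.
move=> H1 H2; have := F_op_add H1 H2; congr F_op.
by apply: functional_extensionality => p; rewrite /opadd /opsub addrACA opprD.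
Qed.

Lemma congF_left g a b : tame g -> congF a b -> congF (opmul g a) (opmul g b).
Proof.
move=> Tg H; have := F_op_left Tg H; congr F_op; apply: functional_extensionality => p.
by rewrite /opmul /opsub linB //; apply: tame_linear.
Qed.

Lemma congF_right g a b : tame g -> congF a b -> congF (opmul a g) (opmul b g).
Proof. exact: F_op_right. Qed.

Lemma congF_mul a b c d :
  tame a -> tame d -> congF a b -> congF c d -> congF (opmul a c) (opmul b d).
Proof. by move=> Ta Td Hab Hcd; apply: congF_trans (congF_left Ta Hcd) (congF_right Td Hab). Qed.

Lemma congF_F_op a b : congF a b -> F_op a -> F_op b.
Proof.
move=> H Ha; have := F_op_sub Ha H; congr F_op.
by apply: functional_extensionality => p; rewrite /opsub opprB addrC subrK.
Qed.

Definition mulop p : op K := fun q => p * q.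

Lemma S1_id : S1 (@opid K).
Proof. by apply: (S1_ext (S1_scal 1)) => p; rewrite /opscale /opid scale1r. Qed.

Lemma S1_Xpow s : S1 (@Xpow K s).
Proof. by elim: s => [|s IH]; [exact: S1_id | exact: (S1_mul (S1_X K) IH)]. Qed.

Lemma S1_Ypow s : S1 (@Ypow K s).
Proof. by elim: s => [|s IH]; [exact: S1_id | exact: (S1_mul (S1_Y K) IH)]. Qed.

Lemma S1_mulop p : S1 (mulop p).
Proof.
elim/poly_ind: p => [|p c IH].
  by apply: (S1_ext (S1_scal 0)) => q; rewrite /opscale /mulop scale0r mul0r.
apply: (S1_ext (S1_add (S1_mul IH (S1_X K)) (S1_scal c))) => q.
by rewrite /opadd /opmul /mulop /Xop /opscale /opid mulrDl mul_polyC -!mulrA.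
Qed.

Lemma S1_lift s p : S1 (laurent_lift s p).
Proof. exact: S1_mul (S1_Ypow _) (S1_mulop _). Qed.

Lemma tame_lift s p : tame (laurent_lift s p).
Proof. exact/S1_tame/S1_lift. Qed.

Lemma lift_shift s t p : laurent_lift (s + t) ('X^t * p) = laurent_lift s p.
Proof.
apply: functional_extensionality => q; rewrite /laurent_lift /opmul Ypow_add -mulrA.
by rewrite -[t]add0n YpowXM expr0 mul1r.
Qed.

Lemma lift_opid : @opid K = laurent_lift 0 1.
Proof. by apply: functional_extensionality => q; rewrite /laurent_lift /opmul /opid mul1r. Qed.

Lemma lift_poly0 s : laurent_lift s 0 = op0.
Proof.
apply: functional_extensionality => q; rewrite /laurent_lift /opmul /op0 mul0r.
exact/lin0/linear_Ypow.
Qed.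

Lemma lift_sub s t p q : opsub (laurent_lift s p) (laurent_lift t q) =
  laurent_lift (s + t) ('X^t * p - 'X^s * q).
Proof.
apply: functional_extensionality => r.
rewrite -{1}(lift_shift s t p) -{1}(lift_shift t s q) addnC /opsub /laurent_lift /opmul.
by rewrite mulrBl linB //; apply: linear_Ypow.
Qed.

(* A lift lies in F only when it lifts 0: it does not kill x^s. *)
Lemma F_op_lift s p : F_op (laurent_lift s p) -> p = 0.
Proof.
case=> N [_ H _]; have := H ('X^s).
rewrite /laurent_lift /opmul -exprD mulrC YpowXM => /eqP.
by rewrite mulf_eq0 expf_eq0 polyX_eq0 andbF => /eqP.
Qed.

Lemma congF_lift s p t q : congF (laurent_lift s p) (laurent_lift t q) -> 'X^t * p = 'X^s * q.
Proof. by rewrite /congF lift_sub => /F_op_lift /eqP; rewrite subr_eq0 => /eqP. Qed.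

Lemma congF_lift0 a s : congF a (laurent_lift s 0) -> F_op a.
Proof.
rewrite lift_poly0 /congF; congr F_op.
by apply: functional_extensionality => p; rewrite /opsub /op0 subr0.
Qed.

(* p y - y p = -(constant term) y p has rank one, so p and y commute modulo F. *)
Lemma congF_comm_Y p : congF (opmul (mulop p) (@Yop K)) (opmul (@Yop K) (mulop p)).
Proof.
have E r : opsub (opmul (mulop p) (@Yop K)) (opmul (@Yop K) (mulop p)) r = - (r`_0) *: Yop p.
  rewrite /opsub /opmul /mulop {2}[r]Ydecomp mulrDr mulrCA linD; last exact: linear_Y.
  rewrite -[Yop ('X * _)]/(Ypow 1 ('X^(0 + 1) * (p * Yop r))) YpowXM expr0 mul1r.
  rewrite [p * _%:P]mulrC mul_polyC linZ; last exact: linear_Y.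
  by rewrite opprD addrA subrr add0r scaleNr.
rewrite /congF (functional_extensionality _ _ E).
exists (maxn 1 (size p)); split.
- by move=> k a b; rewrite coefD coefZ opprD scalerDl scalerA mulrN.
- move=> q; rewrite coefXnM; case: (maxn 1 (size p)) (leq_maxl 1 (size p)) => // n _.
  by rewrite oppr0 scale0r.
- move=> r; apply: leq_trans (size_scale_leq _ _) _; apply: leq_trans (size_poly _ _) _.
  exact: leq_maxr.
Qed.

Lemma congF_comm_Ypow p s : congF (opmul (mulop p) (Ypow s)) (opmul (Ypow s) (mulop p)).
Proof.
elim: s => [|s IH]; first exact: congF_refl.
apply: (@congF_trans _ (opmul (opmul (@Yop K) (mulop p)) (Ypow s))).
  exact: (congF_right (S1_tame (S1_Ypow s)) (congF_comm_Y p)).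
exact: (congF_left tame_Y IH).
Qed.

Lemma congF_lift_mul s1 p1 s2 p2 :
  congF (opmul (laurent_lift s1 p1) (laurent_lift s2 p2)) (laurent_lift (s1 + s2) (p1 * p2)).
Proof.
have Ts1 := S1_tame (S1_Ypow s1); have Tp2 := S1_tame (S1_mulop p2).
apply: congF_trans (congF_left Ts1 (congF_right Tp2 (congF_comm_Ypow p1 s2))) _.
by apply: congF_ext => r; rewrite /laurent_lift /opmul /mulop Ypow_add mulrA.
Qed.

Lemma S1_symbol a : S1 a -> exists s p, congF a (laurent_lift s p).
Proof.
elim=> {a}.
- by exists 0%N, 'X; apply: congF_ext.
- by exists 1%N, 1; apply: congF_ext => r; rewrite /laurent_lift /opmul mul1r.
- by move=> k; exists 0%N, k%:P; apply: congF_ext => r; rewrite /laurent_lift /opmul /opscale /opid mul_polyC.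
- move=> a b _ [s1 [p1 H1]] _ [s2 [p2 H2]].
  exists (s1 + s2)%N, ('X^s2 * p1 + 'X^s1 * p2).
  apply: congF_trans (congF_add H1 H2) _; apply: congF_ext => r.
  rewrite /opadd -{1}(lift_shift s1 s2 p1) -{1}(lift_shift s2 s1 p2) addnC.
  by rewrite /laurent_lift /opmul mulrDl linD //; apply: linear_Ypow.
- move=> a b Sa [s1 [p1 H1]] _ [s2 [p2 H2]]; exists (s1 + s2)%N, (p1 * p2).
  apply: congF_trans (congF_lift_mul s1 p1 s2 p2).
  exact: congF_mul (S1_tame Sa) (tame_lift _ _) H1 H2.
- by move=> a b _ H /functional_extensionality <-.
Qed.

Lemma lift_monomial_neg s k (c : K) : (k <= s)%N ->
  laurent_lift s (c *: 'X^k) = laurent_lift (s - k) c%:P.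
Proof. by move=> ks; rewrite -{1}(subnK ks) -mul_polyC mulrC lift_shift. Qed.

Lemma lift_monomial_pos s k (c : K) : (s <= k)%N ->
  laurent_lift s (c *: 'X^k) = mulop (c *: 'X^(k - s)).
Proof.
move=> sk; rewrite -{1}(subnK sk) exprD scalerAl mulrC -{1}[s]add0n lift_shift.
by apply: functional_extensionality => q; rewrite /laurent_lift /opmul /mulop mulrC.
Qed.

Definition rv n p : 'rV[K]_n := \row_(i < n) p`_i.
Definition pv n (v : 'rV[K]_n) : {poly K} :=
  \poly_(i < n) (if insub i is Some j then v 0 j else 0).

Lemma coef_pv n (v : 'rV[K]_n) (j : 'I_n) : (pv v)`_j = v 0 j.
Proof. by rewrite coef_poly ltn_ord valK. Qed.

Lemma size_pv n (v : 'rV[K]_n) : (size (pv v) <= n)%N.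
Proof. exact: size_poly. Qed.

Lemma eq_poly_small n p q : (size p <= n)%N -> (size q <= n)%N ->
  (forall j : 'I_n, p`_j = q`_j) -> p = q.
Proof.
move=> Hp Hq E; apply/polyP => k; case: (ltnP k n) => Hk; first exact: (E (Ordinal Hk)).
by rewrite !nth_default // ?(leq_trans Hp) ?(leq_trans Hq).
Qed.

Lemma pvK n p : (size p <= n)%N -> pv (rv n p) = p.
Proof. by move=> H; apply: (eq_poly_small (size_pv _) H) => j; rewrite coef_pv mxE. Qed.

Lemma rvK n (v : 'rV[K]_n) : rv n (pv v) = v.
Proof. by apply/rowP => j; rewrite mxE coef_pv. Qed.

Lemma pv_inj n : injective (@pv n).
Proof. by move=> v w E; rewrite -(rvK v) E rvK. Qed.

Lemma pv0 n : pv (0 : 'rV[K]_n) = 0.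
Proof. by apply: (eq_poly_small (size_pv _)) => [|j]; rewrite ?size_poly0 // coef_pv coef0 mxE. Qed.

Lemma pvD n (v w : 'rV[K]_n) : pv (v + w) = pv v + pv w.
Proof.
apply: (eq_poly_small (size_pv _)) => [|j]; last by rewrite coefD !coef_pv mxE.
by rewrite (leq_trans (size_polyD _ _)) // geq_max !size_pv.
Qed.

Lemma pv_mul d n (c : 'I_d -> K) (B : 'M[K]_(d, n)) :
  \sum_(i < d) c i *: pv (row i B) = pv ((\row_i c i) *m B).
Proof.
apply: (eq_poly_small _ (size_pv _)) => [|j].
  apply: (leq_trans (size_sum _ _ _)); apply/bigmax_leqP => i _.
  exact: leq_trans (size_scale_leq _ _) (size_pv _).
rewrite coef_sum coef_pv !mxE; apply: eq_bigr => i _; by rewrite coefZ coef_pv !mxE.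
Qed.

Section Truncation.
Variables (N M : nat) (psi : op K).
Hypotheses (Lpsi : linear_op psi) (psi_small : forall u, (size (psi u) <= M)%N).

Definition trunc_mx : 'M[K]_(N, M) := \matrix_(i < N, j < M) (psi 'X^i)`_j.

Lemma rv_psi u : (size u <= N)%N -> rv M (psi u) = rv N u *m trunc_mx.
Proof.
move=> H; apply/rowP => j; rewrite !mxE {1}(poly_small H) lin_sum // coef_sum.
by apply: eq_bigr => i _; rewrite linZ // coefZ !mxE.
Qed.

Definition trunc_ker_dim := \rank (kermx trunc_mx).
Definition trunc_coker_dim := \rank (trunc_mx^C)%MS.
Definition trunc_ker_basis (i : 'I_trunc_ker_dim) := pv (row i (row_base (kermx trunc_mx))).
Definition trunc_coker_basis (i : 'I_trunc_coker_dim) := pv (row i (row_base trunc_mx^C)%MS).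

Lemma trunc_ker_free c : \sum_i c i *: trunc_ker_basis i = 0 -> forall i, c i = 0.
Proof.
rewrite pv_mul -(pv0 N) => /pv_inj.
rewrite -(mul0mx _ (row_base (kermx trunc_mx))) => /(row_free_inj (row_base_free _)) /rowP E i.
by have := E i; rewrite !mxE.
Qed.

Lemma trunc_ker_basis_ker i : psi (trunc_ker_basis i) = 0.
Proof.
rewrite -(pvK (psi_small _)) rv_psi ?size_pv // rvK.
have : (row i (row_base (kermx trunc_mx)) <= kermx trunc_mx)%MS.
  by rewrite (submx_trans (row_sub _ _)) // eq_row_base.
by move/sub_kermxP => ->; rewrite pv0.
Qed.

Lemma trunc_ker_span u : (size u <= N)%N -> psi u = 0 ->
  exists c, u = \sum_i c i *: trunc_ker_basis i.
Proof.
move=> Hu H0; have : (rv N u <= kermx trunc_mx)%MS.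
  by apply/sub_kermxP; rewrite -rv_psi // H0; apply/rowP => j; rewrite !mxE coef0.
rewrite -(eq_row_base (kermx trunc_mx)) => /submxP [D ED].
exists (fun i => D 0 i); rewrite pv_mul -(pvK Hu) ED; congr (pv (_ *m _)).
by apply/rowP => i; rewrite mxE.
Qed.

Lemma trunc_coker_free u c : (size u <= N)%N ->
  psi u + \sum_i c i *: trunc_coker_basis i = 0 -> forall i, c i = 0.
Proof.
move=> Hu; rewrite pv_mul -(pvK (psi_small u)) -pvD -(pv0 M) => /pv_inj.
rewrite rv_psi // => /eqP; rewrite addrC addr_eq0 => /eqP E.
have : ((\row_i c i) *m row_base trunc_mx^C <= trunc_mx :&: trunc_mx^C)%MS.
  rewrite sub_capmx; apply/andP; split; first by rewrite E -mulNmx submxMl.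
  by rewrite (submx_trans (submxMl _ _)) // eq_row_base.
rewrite capmx_compl submx0 -(mul0mx _ (row_base (trunc_mx^C)%MS)).
move=> /eqP /(row_free_inj (row_base_free _)) /rowP F i.
by have := F i; rewrite !mxE.
Qed.

Lemma trunc_coker_span (t : {poly K}) : (size t <= M)%N ->
  exists u c, (size u <= N)%N /\ t = psi u + \sum_i c i *: trunc_coker_basis i.
Proof.
move=> Ht; have : (rv M t <= trunc_mx + trunc_mx^C)%MS.
  exact/submx_full/addsmx_compl_full.
case/sub_addsmxP => [[u v]] /= Et.
have : (v *m trunc_mx^C <= row_base trunc_mx^C)%MS by rewrite eq_row_base submxMl.
case/submxP => D ED.
exists (pv u), (fun i => D 0 i); split; first exact: size_pv.
rewrite pv_mul -(pvK (psi_small _)) rv_psi ?size_pv // rvK -pvD.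
have -> : \row_i D 0 i = D by apply/rowP => i; rewrite mxE.
by rewrite -ED -Et pvK.
Qed.

Lemma trunc_dim_relation : (trunc_ker_dim + M = trunc_coker_dim + N)%N.
Proof.
rewrite /trunc_ker_dim /trunc_coker_dim mxrank_ker mxrank_compl.
have h1 := rank_leq_row trunc_mx; have h2 := rank_leq_col trunc_mx.
by rewrite [LHS]addnC [RHS]addnC !addnBA // addnC.
Qed.

End Truncation.

Lemma low_zero N u w : (size u <= N)%N -> u = 'X^N * w -> u = 0.
Proof.
move=> Hs E; have [w0|w0] := eqVneq w 0; first by rewrite E w0 mulr0.
move: Hs; rewrite E mulrC size_mulXn // -[X in (_ <= X)%N]addn0 leq_add2l leqn0.
by rewrite size_poly_eq0 (negPf w0).
Qed.

Lemma divp_sumZ (I : finType) (c : I -> K) (G : I -> {poly K}) q :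
  (\sum_(i : I) c i *: G i) %/ q = \sum_(i : I) c i *: (G i %/ q).
Proof. by elim/big_rec2: _ => [|i y1 y2 _ <-]; rewrite ?div0p // divpD divpZl. Qed.

(* Operators acting on x^N K[x] as multiplication by a polynomial q != 0 are
   Fredholm of index N - deg q.  Indeed a u = a u0 + q g for u = u0 + x^N g
   with deg u0 < N, so kernel and cokernel of a are those of the truncated
   map u0 |-> a u0 mod q from polynomials of degree < N to degree < deg q. *)
Section ShiftMultiplication.
Variables (a : op K) (N : nat) (q : {poly K}).
Hypotheses (La : linear_op a) (q0 : q != 0) (aX : forall g, a ('X^N * g) = q * g).

Let M := (size q).-1.
Let psi : op K := fun u => a u %% q.

Let Lpsi : linear_op psi.
Proof. by move=> k u v; rewrite /psi La modpD modpZl. Qed.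

Let psi_small u : (size (psi u) <= M)%N.
Proof. by rewrite /M -ltnS prednK ?ltn_modpN0 // size_poly_gt0. Qed.

Let kb := @trunc_ker_basis N M psi.
Let cb := @trunc_coker_basis N M psi.

Let a_sumZ d (c : 'I_d -> K) (G : 'I_d -> {poly K}) : a (\sum_i c i *: G i) = \sum_i c i *: a (G i).
Proof. by rewrite lin_sum //; apply: eq_bigr => i _; rewrite linZ. Qed.

(* The kernel basis corrects a basis of the truncated kernel by x^N (a u %/ q). *)
Lemma shift_mul_ker : dim_ker a (trunc_ker_dim N M psi).
Proof.
pose B i := kb i - 'X^N * (a (kb i) %/ q).
have aB i : a (B i) = 0.
  rewrite /B linB // aX {1}(divp_eq (a (kb i)) q).
  by have := trunc_ker_basis_ker Lpsi psi_small i; rewrite /psi => ->; rewrite addr0 mulrC subrr.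
have sumB c : \sum_i c i *: B i = \sum_i c i *: kb i
    - 'X^N * \sum_i c i *: (a (kb i) %/ q).
  by rewrite mulr_sumr -sumrB; apply: eq_bigr => i _; rewrite scalerBr scalerAr.
exists B; split.
  move=> c; rewrite sumB => /eqP; rewrite subr_eq0 => /eqP E; apply: trunc_ker_free.
  apply: low_zero E; rewrite (leq_trans (size_sum _ _ _)) //; apply/bigmax_leqP => i _.
  exact: leq_trans (size_scale_leq _ _) (size_pv _).
move=> r; split; last by case=> c ->; rewrite a_sumZ big1 // => i _; rewrite aB scaler0.
rewrite {1}(poly_split N r); set u := \poly_(_ < _) _; set g := \poly_(_ < _) _.
rewrite linD // aX => /eqP; rewrite addr_eq0 => /eqP au.
have [c Ec] : exists c, u = \sum_i c i *: kb i.
  apply: (trunc_ker_span M Lpsi (size_poly _ _)).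
  by rewrite /psi au mulrC modpN modp_mull oppr0.
exists c; rewrite sumB -divp_sumZ -a_sumZ -Ec au [q * g]mulrC divpN mulpK // mulrN opprK.
by rewrite {1}(poly_split N r).
Qed.

(* A complement of the truncated image in degree < deg q complements im a. *)
Lemma shift_mul_coker : dim_coker a (trunc_coker_dim N M psi).
Proof.
exists cb; split.
  move=> r c; rewrite (poly_split N r); set u := \poly_(_ < _) _; set g := \poly_(_ < _) _.
  rewrite linD // aX => E; apply: (@trunc_coker_free N M psi Lpsi psi_small u); first exact: size_poly.
  have Sc : (size (\sum_i c i *: cb i)%R < size q)%N.
    rewrite -[size q]prednK ?size_poly_gt0 // ltnS (leq_trans (size_sum _ _ _)) //.
    by apply/bigmax_leqP => i _; exact: leq_trans (size_scale_leq _ _) (size_pv _).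
  move: (congr1 (fun t => t %% q) E).
  by rewrite !modpD mulrC modp_mull addr0 (modp_small Sc) mod0p.
move=> t; have [|u [c [Su Et]]] := @trunc_coker_span N M psi Lpsi psi_small (t %% q).
  by rewrite /M -ltnS prednK ?ltn_modpN0 // size_poly_gt0.
exists (u + 'X^N * (t %/ q - a u %/ q)), c.
rewrite linD // aX {1}(divp_eq t q) Et /psi {2}(divp_eq (a u) q) mulrBr !(mulrC q).
rewrite /cb; ring.
Qed.

Lemma shift_mul_index : has_index a (N%:Z - M%:Z).
Proof.
exists (trunc_ker_dim N M psi), (trunc_coker_dim N M psi).
split; [exact: shift_mul_ker | split; first exact: shift_mul_coker].
by have := trunc_dim_relation N M psi; lia.
Qed.

End ShiftMultiplication.

(* Part (1): an operator congruent modulo F to the lift of x^(-s) p, p != 0,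
   acts on x^(N0+s) K[x] as multiplication by x^N0 p, hence has index
   (N0 + s) - (N0 + deg p) = -(deg p - s). *)
Lemma index_lift a s p : linear_op a -> congF a (laurent_lift s p) -> p != 0 ->
  has_index a (- laurent_deg s p).
Proof.
move=> La [N0 TN] p0; have [_ H _] := truncated_mono (leq_addr s N0) TN.
have aX g : a ('X^(N0 + s) * g) = ('X^N0 * p) * g.
  have /eqP := H g; rewrite /opsub subr_eq0 => /eqP ->.
  by rewrite /laurent_lift /opmul mulrCA YpowXM mulrA.
have q0 : 'X^N0 * p != 0 by rewrite mulf_neq0 // monic_neq0 // monicXn.
have := shift_mul_index La q0 aX.
rewrite mulrC size_mulXn // /laurent_deg -[size p]prednK ?size_poly_gt0 //.
by congr has_index; lia.
Qed.
Lemma exists_kervec d1 d2 (C : 'M[K]_(d1, d2)) : (d2 < d1)%N ->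
  exists2 v : 'rV[K]_d1, v != 0 & v *m C = 0.
Proof.
move=> lt; have : \rank (kermx C) != 0%N.
  by rewrite mxrank_ker subn_eq0 -ltnNge (leq_ltn_trans (rank_leq_col C)).
rewrite mxrank_eq0 => /eqP nz.
have [i Hi] : exists i, row i (kermx C) != 0.
  case: (pickP (fun i => row i (kermx C) != 0)) => [i Hi|H]; first by exists i.
  by case: nz; apply/row_matrixP => i; rewrite row0; move: (H i) => /negbFE/eqP.
by exists (row i (kermx C)) => //; apply/sub_kermxP; exact: row_sub.
Qed.

Lemma dim_le (phi : op K) d1 d2 (B1 : 'I_d1 -> {poly K}) (B2 : 'I_d2 -> {poly K}) :
  linear_op phi ->
  (forall r (c : 'I_d1 -> K), phi r + \sum_i c i *: B1 i = 0 -> forall i, c i = 0) ->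
  (forall j, exists r (c : 'I_d2 -> K), B1 j = phi r + \sum_i c i *: B2 i) -> (d1 <= d2)%N.
Proof.
move=> L I1 S; rewrite leqNgt; apply/negP => lt.
have [R HR] : exists R : 'I_d1 -> {poly K},
    forall j, exists c : 'I_d2 -> K, B1 j = phi (R j) + \sum_i c i *: B2 i.
  by exists (fun j => sval (constructive_indefinite_description _ (S j))) => j;
     exact: svalP (constructive_indefinite_description _ (S j)).
pose C j := sval (constructive_indefinite_description _ (HR j)).
have HC j : B1 j = phi (R j) + \sum_i C j i *: B2 i.
  exact: svalP (constructive_indefinite_description _ (HR j)).
have [v v0 vC] := exists_kervec (\matrix_(j, k) C j k) lt.
have vC0 i : \sum_j v 0 j * C j i = 0.
  have := congr1 (fun m : 'rV[K]_d2 => m 0 i) vC; rewrite !mxE => E; apply: etrans E.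
  by apply: eq_bigr => j _; rewrite mxE.
have vB2 : \sum_j v 0 j *: \sum_i C j i *: B2 i = 0.
  rewrite (eq_bigr (fun j => \sum_i (v 0 j * C j i) *: B2 i)); last first.
    by move=> j _; rewrite scaler_sumr; apply: eq_bigr => i _; rewrite scalerA.
  by rewrite exchange_big big1 // => i _; rewrite -scaler_suml vC0 scale0r.
have E : phi (- \sum_j v 0 j *: R j) + \sum_j v 0 j *: B1 j = 0.
  have -> : \sum_j v 0 j *: B1 j =
      \sum_j phi (v 0 j *: R j) + \sum_j v 0 j *: \sum_i C j i *: B2 i.
    by rewrite -big_split; apply: eq_bigr => j _; rewrite HC scalerDr (linZ L).
  by rewrite vB2 addr0 linN // (lin_sum L) addNr.
by move/eqP: v0; apply; apply/rowP => j; rewrite mxE (I1 _ _ E).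
Qed.

Lemma sum_delta d (B : 'I_d -> {poly K}) j : B j = \sum_i (i == j)%:R *: B i.
Proof. by rewrite (bigD1 j) //= eqxx scale1r big1 ?addr0 // => i /negPf ->; rewrite scale0r. Qed.

Lemma dim_ker_le a d1 d2 : dim_ker a d1 -> dim_ker a d2 -> (d1 <= d2)%N.
Proof.
case=> B1 [I1 S1'] [B2 [I2 S2]].
apply: (@dim_le op0 _ _ B1 B2) => [k p q|r c|j]; first by rewrite /op0 scaler0 addr0.
  by rewrite add0r; apply: I1.
have /S2 [c E] : a (B1 j) = 0 by apply/S1'; exists (fun i => (i == j)%:R); apply: sum_delta.
by exists 0, c; rewrite add0r.
Qed.

Lemma dim_coker_le a d1 d2 : linear_op a -> dim_coker a d1 -> dim_coker a d2 -> (d1 <= d2)%N.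
Proof. by move=> L [B1 [I1 _]] [B2 [_ S2]]; apply: (@dim_le a _ _ B1 B2) => // j; exact: S2. Qed.

Lemma has_index_uniq a n m : linear_op a -> has_index a n -> has_index a m -> n = m.
Proof.
move=> L [dk1 [dc1 [K1 [C1 ->]]]] [dk2 [dc2 [K2 [C2 ->]]]].
have -> : dk1 = dk2 by apply/eqP; rewrite eqn_leq (dim_ker_le K1 K2) (dim_ker_le K2 K1).
by have -> : dc1 = dc2 by apply/eqP; rewrite eqn_leq (dim_coker_le L C1 C2) (dim_coker_le L C2 C1).
Qed.

Lemma S1_scale k a : S1 a -> S1 (opscale k a).
Proof. exact: S1_mul (S1_scal k). Qed.

Lemma S1_op0 : S1 op0.
Proof. by apply: (S1_ext (S1_scal 0)) => p; rewrite /opscale scale0r. Qed.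

Lemma opsubE a b : opsub a b = opadd a (opscale (-1) b).
Proof. by apply: functional_extensionality => p; rewrite /opsub /opadd /opscale scaleN1r. Qed.

Lemma S1_sub a b : S1 a -> S1 b -> S1 (opsub a b).
Proof. by move=> Sa Sb; rewrite opsubE; apply: S1_add Sa (S1_scale _ Sb). Qed.

Definition E00 : op K := opsub (@opid K) (opmul (@Xop K) (@Yop K)).

Lemma S1_E00 : S1 E00.
Proof. exact: S1_sub S1_id (S1_mul (S1_X K) (S1_Y K)). Qed.

Lemma E00E p : E00 p = (p`_0)%:P.
Proof. by rewrite /E00 /opsub /opmul /opid /Xop {1}[p]Ydecomp addrC addKr. Qed.

Lemma E00X : opmul E00 (@Xop K) = op0.
Proof. by apply: functional_extensionality => p; rewrite /opmul E00E /Xop coefXM polyC0. Qed.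

Lemma EopD i j : Eop i j = opmul (Xpow i) (opmul E00 (Ypow j)).
Proof.
apply: functional_extensionality => p.
by rewrite EopE /opmul XpowE E00E coefYpow add0n mulrC mul_polyC.
Qed.

Lemma S1_Eop i j : S1 (@Eop K i j).
Proof. by rewrite EopD; exact: S1_mul (S1_Xpow _) (S1_mul S1_E00 (S1_Ypow _)). Qed.

Lemma opid_notF : ~ F_op (@opid K).
Proof. by case=> N [_ H _]; have /eqP := H 1; rewrite mulr1 expf_eq0 polyX_eq0 andbF. Qed.

(* If e g = 0 while g is left invertible in S1, then e lies in F: the
   symbols multiply in the domain K[x, x^-1] and the symbol of g is nonzero. *)
Lemma killed_by_left_invertible (e g h : op K) : S1 e -> S1 g -> S1 h ->
  opmul e g = op0 -> opmul h g = @opid K -> F_op e.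
Proof.
move=> Se Su Sv Eu Vu.
have [s1 [p1 H1]] := S1_symbol Se; have [s2 [p2 H2]] := S1_symbol Su.
have [s3 [p3 H3]] := S1_symbol Sv.
have Heu := congF_trans (congF_mul (S1_tame Se) (tame_lift _ _) H1 H2) (congF_lift_mul s1 p1 s2 p2).
have Hvu := congF_trans (congF_mul (S1_tame Sv) (tame_lift _ _) H3 H2) (congF_lift_mul s3 p3 s2 p2).
rewrite Eu in Heu; rewrite Vu in Hvu.
have p20 : p2 != 0.
  apply: contra_notN opid_notF => /eqP p20.
  by apply: (@congF_lift0 _ (s3 + s2)); rewrite -(mulr0 p3) -p20.
have : p1 * p2 = 0 by apply: (@F_op_lift (s1 + s2)); apply: congF_F_op Heu F_op_zero.
move/eqP; rewrite mulf_eq0 (negPf p20) orbF => /eqP p10.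
by apply: (@congF_lift0 e s1); rewrite -p10.
Qed.

Lemma monomial_factors n p1 p2 : 'X^n = p2 * p1 ->
  exists k1 k2 (c : K), [/\ c != 0, p1 = c *: 'X^k1, p2 = c^-1 *: 'X^k2 & n = (k2 + k1)%N].
Proof.
have monomial_dvd p : p %| 'X^n -> exists k (c : K), c != 0 /\ p = c *: 'X^k.
  have -> : ('X^n : {poly K}) = ('X - 0%:P) ^+ n by rewrite polyC0 subr0.
  case/dvdp_exp_XsubCP => k _.
  rewrite polyC0 subr0 => /eqpP [[c1 c2]] /= /andP [c10 c20] E.
  exists k, (c2 / c1); split; first by rewrite mulf_neq0 // invr_eq0.
  by rewrite mulrC -scalerA -E scalerA mulVf // scale1r.
move=> E.
have [k1 [c1 [c10 Ep1]]] : exists k (c : K), c != 0 /\ p1 = c *: 'X^k.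
  by apply: monomial_dvd; rewrite E dvdp_mull.
have [k2 [c2 [c20 Ep2]]] : exists k (c : K), c != 0 /\ p2 = c *: 'X^k.
  by apply: monomial_dvd; rewrite E dvdp_mulr.
rewrite Ep1 Ep2 -scalerAl -scalerAr scalerA -exprD in E.
have En : n = (k2 + k1)%N.
  by have := congr1 (fun P : {poly K} => size P) E; rewrite size_polyXn size_scale ?mulf_neq0 // size_polyXn => -[].
have Ec : c2 * c1 = 1.
  by have := congr1 (fun P : {poly K} => P`_n) E; rewrite coefZ -En !coefXn eqxx mulr1 => <-.
exists k1, k2, c1; split => //; rewrite Ep2; congr (_ *: _).
by rewrite -[c2]mulr1 -(mulfV c10) mulrA Ec mul1r.
Qed.

(* An operator congruent to c x^(-s) with s > 0 has index s, hence a
   nonzero kernel. *)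
Lemma lift_const_ker a s (c : K) : linear_op a -> congF a (laurent_lift s c%:P) ->
  c != 0 -> (0 < s)%N -> exists2 u, u != 0 & a u = 0.
Proof.
move=> La H c0 s0; have [|dk [dc [[B [IB KB]] [_ Eind]]]] := index_lift La H; first by rewrite polyC_eq0.
rewrite /laurent_deg size_polyC c0 /= sub0r opprK in Eind.
have dk0 : (0 < dk)%N by move: Eind; case: (dk) => //; lia.
exists (B (Ordinal dk0)); last by apply/KB; exists (fun i => (i == Ordinal dk0)%:R); apply: sum_delta.
apply/eqP => B0; have := IB (fun i => (i == Ordinal dk0)%:R); rewrite -sum_delta => /(_ B0 (Ordinal dk0)).
by rewrite eqxx => /eqP; rewrite oner_eq0.
Qed.

Definition S1_endo (rho : op K -> op K) :=
  [/\ forall a, S1 a -> S1 (rho a),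
      forall a b, S1 a -> S1 b -> rho (opadd a b) = opadd (rho a) (rho b),
      forall k a, S1 a -> rho (opscale k a) = opscale k (rho a),
      forall a b, S1 a -> S1 b -> rho (opmul a b) = opmul (rho a) (rho b) &
      rho (@opid K) = @opid K].

Section Endomorphism.
Variable rho : op K -> op K.
Hypothesis rho_endo : S1_endo rho.

Lemma endo_S1 a : S1 a -> S1 (rho a).
Proof. by case: rho_endo => H _ _ _ _; apply: H. Qed.

Lemma endo_add a b : S1 a -> S1 b -> rho (opadd a b) = opadd (rho a) (rho b).
Proof. by case: rho_endo => _ H _ _ _; apply: H. Qed.

Lemma endo_scale k a : S1 a -> rho (opscale k a) = opscale k (rho a).
Proof. by case: rho_endo => _ _ H _ _; apply: H. Qed.

Lemma endo_mul a b : S1 a -> S1 b -> rho (opmul a b) = opmul (rho a) (rho b).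
Proof. by case: rho_endo => _ _ _ H _; apply: H. Qed.

Lemma endo_id : rho (@opid K) = @opid K.
Proof. by case: rho_endo. Qed.

Lemma endo_op0 : rho op0 = op0.
Proof.
have -> : op0 = opscale 0 (@opid K).
  by apply: functional_extensionality => p; rewrite /opscale scale0r.
by rewrite endo_scale ?endo_id //; exact: S1_id.
Qed.

Lemma endo_sub a b : S1 a -> S1 b -> rho (opsub a b) = opsub (rho a) (rho b).
Proof. by move=> Sa Sb; rewrite !opsubE endo_add ?endo_scale //; apply: S1_scale. Qed.

Lemma endo_YX : opmul (rho (@Yop K)) (rho (@Xop K)) = @opid K.
Proof. by rewrite -endo_mul ?YX ?endo_id //; [exact: S1_Y | exact: S1_X]. Qed.

(* rho preserves F: the matrix unit E00 satisfies E00 x = 0 with x left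
   invertible, and F is spanned by x^i E00 y^j. *)
Lemma endo_Eop i j : F_op (rho (Eop i j)).
Proof.
have SE00 := S1_E00; have SXi := S1_Xpow i; have SYj := S1_Ypow j.
rewrite EopD (endo_mul SXi (S1_mul SE00 SYj)) (endo_mul SE00 SYj).
apply: F_op_left; first exact/S1_tame/endo_S1.
apply: F_op_right; first exact/S1_tame/endo_S1.
apply: (@killed_by_left_invertible _ (rho (@Xop K)) (rho (@Yop K))).
- exact: endo_S1.
- exact/endo_S1/S1_X.
- exact/endo_S1/S1_Y.
- by rewrite -endo_mul ?E00X ?endo_op0 //; exact: S1_X.
- exact: endo_YX.
Qed.

Lemma endo_F_op f : F_op f -> F_op (rho f).
Proof.
move=> /inF_F_op [n [c /functional_extensionality ->]].
pose P (b : op K) := S1 b /\ F_op (rho b).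
have P0 : P op0 by split; [exact: S1_op0 | rewrite endo_op0; exact: F_op_zero].
have PD b1 b2 : P b1 -> P b2 -> P (opadd b1 b2).
  by case=> S1b1 F1 [S1b2 F2]; split; [exact: S1_add | rewrite endo_add //; exact: F_op_add].
have Psum m (G : nat -> op K) : (forall i, P (G i)) -> P (fun p => \sum_(i < m) G i p).
  elim: m => [|m IH] HG.
    have -> : (fun p => \sum_(i < 0) G i p) = op0.
      by apply: functional_extensionality => p; rewrite big_ord0.
    exact: P0.
  have -> : (fun p => \sum_(i < m.+1) G i p) = opadd (fun p => \sum_(i < m) G i p) (G m).
    by apply: functional_extensionality => p; rewrite big_ord_recr.
  exact: PD (IH HG) (HG m).
suff [] : P (fun p => \sum_(i < n) (fun i p => \sum_(j < n) c i j *: Eop i j p) i p) by [].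
apply: (Psum n (fun i p => \sum_(j < n) c i j *: Eop i j p)) => i; apply: (Psum n (fun j => opscale (c i j) (Eop i j))) => j.
split; first exact/S1_scale/S1_Eop.
by rewrite endo_scale; [exact/F_op_scale/endo_Eop | exact: S1_Eop].
Qed.

Lemma endo_congF a b : S1 a -> S1 b -> congF a b -> congF (rho a) (rho b).
Proof. by move=> Sa Sb H; rewrite /congF -endo_sub //; apply: endo_F_op. Qed.

(* A left invertible operator is injective. *)
Lemma endo_injective_X u : rho (@Xop K) u = 0 -> u = 0.
Proof.
have LY := tame_linear (S1_tame (endo_S1 (S1_Y K))).
by move=> Hu; have := congr1 (fun f => f u) endo_YX; rewrite /opmul /opid Hu (lin0 LY).
Qed.

(* rho x and rho y have symbols mu x^e and mu^-1 x^-e: their symbols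
   multiply to 1, so they are monomials, and the exponent of rho x cannot be
   negative because rho x is injective. *)
Lemma endo_symbol_XY : exists e (mu : K), [/\ mu != 0,
  congF (rho (@Xop K)) (mulop (mu *: 'X^e)) &
  congF (rho (@Yop K)) (laurent_lift e (mu^-1)%:P)].
Proof.
have SX := endo_S1 (S1_X K); have SY := endo_S1 (S1_Y K).
have [s1 [p1 H1]] := S1_symbol SX; have [s2 [p2 H2]] := S1_symbol SY.
have H := congF_trans (congF_mul (S1_tame SY) (tame_lift _ _) H2 H1) (congF_lift_mul s2 p2 s1 p1).
rewrite endo_YX lift_opid in H.
have /monomial_factors [k1 [k2 [mu [mu0 Ep1 Ep2 Es]]]] : 'X^(s2 + s1) = p2 * p1.
  by have := congF_lift H; rewrite mulr1 expr0 mul1r.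
rewrite {}Ep1 in H1; rewrite {}Ep2 in H2.
have [Hk|Hk] := ltnP k1 s1.
  rewrite (lift_monomial_neg _ (ltnW Hk)) in H1.
  have [|u /eqP u0] := lift_const_ker (tame_linear (S1_tame SX)) H1 mu0; first by rewrite subn_gt0.
  by move/endo_injective_X.
exists (k1 - s1)%N, mu; split => //; first by rewrite -lift_monomial_pos.
have -> : (k1 - s1 = k1 - s1 + k2 - k2)%N by rewrite addnK.
by rewrite -(lift_monomial_neg _ (leq_addl _ _)) (_ : k1 - s1 + k2 = s2)%N //; lia.
Qed.

Lemma endo_mulop P r : congF (rho (@Xop K)) (mulop P) -> congF (rho (mulop r)) (mulop (r \Po P)).
Proof.
move=> HX; elim/poly_ind: r => [|r c IH].
  have mulop0 : mulop 0 = op0 by apply: functional_extensionality => q; rewrite /mulop mul0r.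
  by rewrite comp_poly0 mulop0 endo_op0; exact: congF_refl.
have -> : mulop (r * 'X + c%:P) = opadd (opmul (mulop r) (@Xop K)) (opscale c (@opid K)).
  apply: functional_extensionality => p.
  by rewrite /opadd /opmul /mulop /Xop /opscale /opid mulrDl mul_polyC -!mulrA.
have Sr := S1_mulop r.
rewrite (endo_add (S1_mul Sr (S1_X K)) (S1_scal c)) (endo_mul Sr (S1_X K)).
rewrite (endo_scale c S1_id) endo_id.
apply: congF_trans (congF_add (congF_mul (S1_tame (endo_S1 Sr)) (S1_tame (S1_mulop P)) IH HX)
  (congF_refl _)) _.
apply: congF_ext => q.
by rewrite comp_poly_MXaddC /opadd /opmul /mulop /opscale /opid mulrDl mul_polyC mulrA.
Qed.

Lemma endo_Ypow e (c : K) t : congF (rho (@Yop K)) (laurent_lift e c%:P) ->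
  congF (rho (Ypow t)) (laurent_lift (e * t) (c ^+ t)%:P).
Proof.
move=> HY; elim: t => [|t IH]; first by rewrite endo_id muln0 expr0 -lift_opid; exact: congF_refl.
rewrite (endo_mul (S1_Y K) (S1_Ypow t)).
apply: congF_trans (congF_mul (S1_tame (endo_S1 (S1_Y K))) (tame_lift _ _) HY IH) _.
by rewrite mulnS exprS polyCM; exact: congF_lift_mul.
Qed.

Lemma endo_lift e (c : K) P t r : congF (rho (@Xop K)) (mulop P) ->
  congF (rho (@Yop K)) (laurent_lift e c%:P) ->
  congF (rho (laurent_lift t r)) (laurent_lift (e * t) ((c ^+ t) *: (r \Po P))).
Proof.
move=> HX HY; rewrite (endo_mul (S1_Ypow t) (S1_mulop r)).
apply: congF_trans (congF_mul (S1_tame (endo_S1 (S1_Ypow t))) (S1_tame (S1_mulop _))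
  (endo_Ypow t HY) (endo_mulop r HX)) _.
have -> : mulop (r \Po P) = laurent_lift 0 (r \Po P) by [].
by rewrite -mul_polyC -[X in congF _ (laurent_lift X _)]addn0; exact: congF_lift_mul.
Qed.

End Endomorphism.

(* If sigma has a left inverse endomorphism tau, the exponent e of
   Lemma endo_symbol_XY is 1: composing gives x = nu^e mu x^(e e') modulo F. *)
Lemma endo_symbol_X_linear (sigma tau : op K -> op K) : S1_endo sigma -> S1_endo tau ->
  (forall a, S1 a -> tau (sigma a) = a) ->
  exists2 mu : K, mu != 0 & congF (sigma (@Xop K)) (mulop (mu *: 'X)) /\
    congF (sigma (@Yop K)) (laurent_lift 1 (mu^-1)%:P).
Proof.
move=> Es Et tsK.
have [e [mu [mu0 HX HY]]] := endo_symbol_XY Es.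
have [e' [nu [nu0 HX' _]]] := endo_symbol_XY Et.
have H := endo_congF Et (endo_S1 Es (S1_X K)) (S1_mulop _) HX.
rewrite tsK in H; last exact: S1_X.
have /(@congF_lift 0 _ 0) := congF_trans H (endo_mulop Et (mu *: 'X^e) HX').
rewrite expr0 !mul1r comp_polyZ rmorphXn /= comp_polyX exprZn -exprM scalerA => E.
have /eqP : size ('X : {poly K}) = size ((mu * nu ^+ e) *: 'X^(e' * e)) by rewrite -E.
rewrite size_polyX size_scale ?mulf_neq0 ?expf_neq0 // size_polyXn eqSS eq_sym muln_eq1.
by case/andP => _ /eqP e1; exists mu; rewrite // -{1}[mu *: 'X]/(mu *: 'X^1) -e1.
Qed.

Section Automorphism.
Variable sigma : op K -> op K.
Hypothesis sigma_aut : is_S1_aut sigma.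

Lemma aut_endo : S1_endo sigma.
Proof.
case: sigma_aut => Ss [_ [_ [Ad [Sc [Mu Id]]]]].
split => // [a b Sa Sb|k a Sa|a b Sa Sb|]; apply: functional_extensionality.
- exact: Ad.
- exact: Sc.
- exact: Mu.
- exact: Id.
Qed.

Definition aut_inv (b : op K) : op K :=
  epsilon (inhabits (@opid K)) (fun a => S1 a /\ sigma a =1 b).

Lemma aut_invP b : S1 b -> S1 (aut_inv b) /\ sigma (aut_inv b) =1 b.
Proof.
case: sigma_aut => _ [Surj _] Sb.
apply: (epsilon_spec (inhabits (@opid K)) (fun a => S1 a /\ sigma a =1 b)).
by have [a [Sa Ea]] := Surj b Sb; exists a.
Qed.

Lemma aut_inj a b : S1 a -> S1 b -> sigma a =1 sigma b -> a = b.
Proof. by case: sigma_aut => _ [_ [Inj _]] Sa Sb /(Inj _ _ Sa Sb)/functional_extensionality. Qed.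

Lemma aut_invK a : S1 a -> aut_inv (sigma a) = a.
Proof.
case: sigma_aut => Ss _ Sa; have [Sia Eia] := aut_invP (Ss a Sa).
exact: aut_inj Sia Sa Eia.
Qed.

Lemma aut_inv_endo : S1_endo aut_inv.
Proof.
have Si b (Sb : S1 b) := (aut_invP Sb).1; have Ei b (Sb : S1 b) := (aut_invP Sb).2.
have [Ss Ad Sc Mu Id] := aut_endo.
split => [b Sb|a b Sa Sb|k a Sa|a b Sa Sb|]; first exact: Si.
- apply: aut_inj; [exact/Si/S1_add | exact: S1_add (Si _ Sa) (Si _ Sb) |].
  by rewrite (Ad _ _ (Si _ Sa) (Si _ Sb)) => p; rewrite (Ei _ (S1_add Sa Sb)) /opadd (Ei _ Sa) (Ei _ Sb).
- apply: aut_inj; [exact/Si/S1_scale | exact/S1_scale/Si |].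
  by rewrite (Sc _ _ (Si _ Sa)) => p; rewrite (Ei _ (S1_scale k Sa)) /opscale (Ei _ Sa).
- apply: aut_inj; [exact/Si/S1_mul | exact: S1_mul (Si _ Sa) (Si _ Sb) |].
  by rewrite (Mu _ _ (Si _ Sa) (Si _ Sb)) => p; rewrite (Ei _ (S1_mul Sa Sb)) /opmul (Ei _ Sa) (Ei _ Sb).
- by rewrite -{1}Id aut_invK //; exact: S1_id.
Qed.

End Automorphism.

(* Part (2): an automorphism maps x^-t r to mu^-t x^-t r(mu x) modulo F,
   which has the same degree, so the index is preserved. *)
Lemma index_aut sigma a : is_S1_aut sigma -> S1 a -> ~ F_op a ->
  forall n : int, has_index a n -> has_index (sigma a) n.
Proof.
move=> Hs Sa nFa n Hn; have Es := aut_endo Hs.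
have [mu mu0 [HX HY]] := endo_symbol_X_linear Es (aut_inv_endo Hs) (aut_invK Hs).
have [t [r Ha]] := S1_symbol Sa.
have r0 : r != 0 by apply: contra_notN nFa => /eqP r0; apply: (@congF_lift0 a t); rewrite -r0.
have La := tame_linear (S1_tame Sa).
rewrite (has_index_uniq La Hn (index_lift La Ha r0)).
pose P := (mu^-1 ^+ t) *: (r \Po (mu *: 'X)).
have HsA : congF (sigma a) (laurent_lift (1 * t) P).
  exact: congF_trans (endo_congF Es Sa (S1_lift t r) Ha) (endo_lift Es t r HX HY).
have sP : size P = size r.
  by rewrite size_scale ?expf_neq0 ?invr_neq0 // size_comp_poly2 // size_scale // size_polyX.
have P0 : P != 0 by rewrite -size_poly_eq0 sP size_poly_eq0.
have := index_lift (tame_linear (S1_tame (endo_S1 Es Sa))) HsA P0.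
by rewrite /laurent_deg mul1n sP.
Qed.

End Jacobson.

Theorem lemma4p4 (K : fieldType) (charK : [pchar K] =i pred0) :
  (forall a : op K, S1 a -> ~ inF a ->
     (exists (s : nat) (p : {poly K}), inF (opsub a (laurent_lift s p))) /\
     (forall (s : nat) (p : {poly K}), inF (opsub a (laurent_lift s p)) ->
        has_index a (- laurent_deg s p))) /\
  (forall (sigma : op K -> op K) (a : op K), is_S1_aut sigma -> S1 a -> ~ inF a ->
     forall n : int, has_index a n -> has_index (sigma a) n).
Proof.
split=> [a Sa nFa|sigma a Hs Sa nFa]; last by apply: index_aut => // /inF_F_op.
have nFa' : ~ F_op a by move/inF_F_op.
split=> [|s p /inF_F_op Ha].
  by have [s [p H]] := S1_symbol Sa; exists s, p; apply/inF_F_op.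
have p0 : p != 0 by apply: contra_notN nFa' => /eqP p0; apply: (@congF_lift0 K a s); rewrite -p0.
exact: index_lift (tame_linear (S1_tame Sa)) Ha p0.
Qed.
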